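(* Let $(G,\mathbf p)$ be a framework (with $\mathbf p$ pinned) and let $E$ be a stiff-bar energy at $\mathbf p$. A trajectory $\mathbf p(t)$ at $\mathbf p$ is a $(j,k)$-flex of $(G,\mathbf p)$ if and only if it is a $(j,2k)$ $E$-flex. Furthermore, $\mathbf p(t)$ is a $(j,2k)$ $E$-flex if and only if it is a $(j,2k+1)$ $E$-flex.
   Context: Fix a dimension $d$. A configuration is $\mathbf p=(\mathbf p_1,\dots,\mathbf p_n)$, $\mathbf p_i\in\mathbb R^d$; a framework $(G,\mathbf p)$ consists of a graph $G$ on $\{1,\dots,n\}$ and a configuration with $\mathbf p_i\ne\mathbf p_j$ for every edge $ij$. A configuration $\mathbf q$ is in $\ell$-pinned position if $\mathbf q_1=0$ and, for $2\le i\le\ell+1$, $\mathbf q_i\in\mathrm{span}(e_1,\dots,e_{i-1})$; these form a linear space. If $\mathbf p$ has $\ell$-dimensional affine span, it is pinned if $\mathbf p_1,\dots,\mathbf p_{\ell+1}$ are affinely independent and $\mathbf p$ is in $\ell$-pinned position. Throughout, $\mathbf p$ is pinned with $\ell$-dimensional affine span, and all trajectories are $\ell$-pinned. A trajectory at $\mathbf p$ is an analytic non-constant map $t\mapsto\mathbf p(t)$ into $\ell$-pinned configuration space, $t\in[0,\varepsilon]$, with $\mathbf p(0)=\mathbf p$. A $C^k$ function $\varphi(t)$ is $k$-vanishing if $\varphi^{(i)}(0)=0$ for $1\le i\le k$, and $k$-active if $(k-1)$-vanishing but not $k$-vanishing. With $\mathbf m(\mathbf q)=(|\mathbf q_i-\mathbf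 q_j|^2)_{ij\in E(G)}$, a $(j,k)$-flex is a $j$-active trajectory with $\mathbf m(\mathbf p(t))$ $k$-vanishing. For a function $f$ on $\ell$-pinned configuration space analytic near $\mathbf p$, a $(j,k)$ $f$-flex is a $j$-active trajectory $\mathbf p(t)$ at $\mathbf p$ with $f(\mathbf p(t))$ $k$-vanishing; an $E$-flex is an $f$-flex with $f=E$. A stiff-bar energy at $\mathbf p$ is $E(\mathbf q)=\sum_{ij\in E(G)}E_{ij}(|\mathbf q_i-\mathbf q_j|)$, where each $E_{ij}:\mathbb R\to\mathbb R$ is analytic at $d_{ij}=|\mathbf p_i-\mathbf p_j|\ne0$, has a strict local minimum at $d_{ij}$, and $E_{ij}''(d_{ij})>0$. *)

From Stdlib Require Import Reals List Lra.
From Coquelicot Require Import Coquelicot.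
Open Scope R_scope.

(* Points are indexed 0..n-1 (point i of the paper is index i-1),
   coordinates 0..d-1 (e_{c+1} of the paper is coordinate c).
   A configuration is a function (point index) -> (coordinate) -> R;
   only the values with indices < n and coordinates < d are meaningful. *)
Definition point := nat -> R.
Definition config := nat -> point.

Fixpoint sumn_R (m : nat) (f : nat -> R) : R :=
  match m with
  | O => 0
  | S m' => sumn_R m' f + f m'
  end.

Definition sqdist (d : nat) (x y : point) : R :=
  sumn_R d (fun c => (x c - y c) ^ 2).
Definition dist (d : nat) (x y : point) : R := sqrt (sqdist d x y).

Definition simple_graph (n : nat) (E : list (nat * nat)) : Prop :=
  NoDup E /\ forall e, In e E -> (fst e < snd e)%nat /\ (snd e < n)%nat.

Definition framework (n d : nat) (E : list (nat * nat)) (p : config) : Prop :=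
  simple_graph n E /\
  forall e, In e E -> exists c, (c < d)%nat /\ p (fst e) c <> p (snd e) c.

Definition affinely_independent (d m : nat) (x : config) : Prop :=
  forall lam : nat -> R,
    sumn_R m lam = 0 ->
    (forall c, (c < d)%nat -> sumn_R m (fun k => lam k * x k c) = 0) ->
    forall k, (k < m)%nat -> lam k = 0.

Definition affine_span_dim (n d : nat) (p : config) (l : nat) : Prop :=
  (exists idx : nat -> nat, (forall k, (k <= l)%nat -> (idx k < n)%nat) /\
      affinely_independent d (S l) (fun k => p (idx k))) /\
  (forall idx : nat -> nat, (forall k, (k <= S l)%nat -> (idx k < n)%nat) ->
      ~ affinely_independent d (S (S l)) (fun k => p (idx k))).

(* l-pinned position: q_1 = 0 and q_i in span(e_1,..,e_{i-1}) for 2 <= i <= l+1;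
   0-based: for point index i <= l, all coordinates c >= i vanish. *)
Definition pinned_position (n d l : nat) (q : config) : Prop :=
  forall i c, (i <= l)%nat -> (i < n)%nat -> (i <= c)%nat -> (c < d)%nat ->
    q i c = 0.

Definition pinned (n d : nat) (p : config) (l : nat) : Prop :=
  affine_span_dim n d p l /\ (l < n)%nat /\
  affinely_independent d (S l) p /\ pinned_position n d l p.

Definition analytic_at (f : R -> R) (t0 : R) : Prop :=
  exists (a : nat -> R) (r : R), 0 < r /\
    forall t, Rabs (t - t0) < r -> is_series (fun k => a k * (t - t0) ^ k) (f t).

Definition trajectory (n d l : nat) (p : config) (P : R -> config) : Prop :=
  exists eps, 0 < eps /\
    (forall i c, (i < n)%nat -> (c < d)%nat -> P 0 i c = p i c) /\
    (forall t, 0 <= t <= eps -> pinned_position n d l (P t)) /\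
    (forall i c t0, (i < n)%nat -> (c < d)%nat -> 0 <= t0 <= eps ->
        analytic_at (fun t => P t i c) t0) /\
    (exists t i c, 0 <= t <= eps /\ (i < n)%nat /\ (c < d)%nat /\
        P t i c <> P 0 i c).

Definition k_vanishing (phi : R -> R) (k : nat) : Prop :=
  forall i, (1 <= i <= k)%nat -> Derive_n phi i 0 = 0.

Definition traj_vanishing (n d : nat) (P : R -> config) (k : nat) : Prop :=
  forall i c, (i < n)%nat -> (c < d)%nat -> k_vanishing (fun t => P t i c) k.

Definition traj_active (n d : nat) (P : R -> config) (j : nat) : Prop :=
  (1 <= j)%nat /\ traj_vanishing n d P (j - 1) /\ ~ traj_vanishing n d P j.

(* measurement map m(q) = (|q_i - q_j|^2)_{ij in E} composed with P is
   k-vanishing (coordinatewise) *)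
Definition flex (n d l : nat) (E : list (nat * nat)) (p : config)
    (P : R -> config) (j k : nat) : Prop :=
  trajectory n d l p P /\ traj_active n d P j /\
  forall e, In e E -> k_vanishing (fun t => sqdist d (P t (fst e)) (P t (snd e))) k.

Definition f_flex (n d l : nat) (p : config) (f : config -> R)
    (P : R -> config) (j k : nat) : Prop :=
  trajectory n d l p P /\ traj_active n d P j /\ k_vanishing (fun t => f (P t)) k.

Definition energy (d : nat) (E : list (nat * nat)) (Eb : nat -> nat -> R -> R)
    (q : config) : R :=
  fold_right Rplus 0 (map (fun e => Eb (fst e) (snd e) (dist d (q (fst e)) (q (snd e)))) E).

Definition stiff_bar (d : nat) (E : list (nat * nat)) (Eb : nat -> nat -> R -> R)
    (p : config) : Prop :=
  forall e, In e E ->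
    let f := Eb (fst e) (snd e) in
    let dij := dist d (p (fst e)) (p (snd e)) in
    analytic_at f dij /\
    (exists delta, 0 < delta /\
       forall x, 0 < Rabs (x - dij) < delta -> f dij < f x) /\
    Derive_n f 2 dij > 0.

From Pilot Require Import Defs.
From Stdlib Require Import Reals List Lra Lia FunctionalExtensionality.
From Coquelicot Require Import Coquelicot.
Open Scope R_scope.

(* Write s_e(t) for the squared length of bar e along the trajectory and
   phi_e(x) = E_e(sqrt x), so that the energy is the sum of the phi_e(s_e(t)).
   Since E_e has a nondegenerate minimum at the length of bar e,
   phi_e'(s_e(0)) = 0 and phi_e''(s_e(0)) > 0.  Hence, if
   s_e(t) - s_e(0) = c_e t^m + O(t^(m+1)), then
   phi_e(s_e(t)) - phi_e(s_e(0)) = (phi_e''(s_e(0)) / 2) c_e^2 t^(2m) + O(t^(2m+1)).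
   So the energy has nonnegative leading coefficients, all in even degree: if
   every s_e is k-vanishing the energy is (2k+1)-vanishing, and if the energy
   is 2k-vanishing then, order by order up to k, no c_e can be nonzero. *)

Lemma locally_Rabs_lt (x0 r y : R) : Rabs (y - x0) < r ->
  locally y (fun z => Rabs (z - x0) < r).
Proof.
  intros Hy.
  assert (Hpos : 0 < r - Rabs (y - x0)) by lra.
  exists (mkposreal _ Hpos). intros z Hz.
  change (Rabs (z - y) < r - Rabs (y - x0)) in Hz.
  pose proof (Rabs_triang (z - y) (y - x0)) as Htri.
  replace (z - y + (y - x0)) with (z - x0) in Htri by ring. lra.
Qed.

Lemma ex_derive_continuous_ball (g : R -> R) (x0 : R) : ex_derive g x0 ->
  forall eps, 0 < eps -> exists delta, 0 < delta /\
    forall y, Rabs (y - x0) < delta -> Rabs (g y - g x0) < eps.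
Proof.
  intros Hd eps Heps.
  destruct (proj1 (filterlim_locally g (g x0)) (ex_derive_continuous g x0 Hd)
              (mkposreal eps Heps)) as [delta Hdelta].
  exists (pos delta). split; [apply cond_pos|]. intros y Hy. exact (Hdelta y Hy).
Qed.

(** * Smooth functions *)

Fixpoint Cn_ball (n : nat) (f : R -> R) (x0 r : R) : Prop :=
  match n with
  | O => True
  | S n => (forall y, Rabs (y - x0) < r -> ex_derive f y) /\ Cn_ball n (Derive f) x0 r
  end.

Lemma Cn_ball_ext n : forall f g x0 r, (forall y, Rabs (y - x0) < r -> f y = g y) ->
  Cn_ball n f x0 r -> Cn_ball n g x0 r.
Proof.
  induction n as [|n IH]; simpl; auto.
  intros f g x0 r Hfg [Hd Hn]. split.
  - intros y Hy. apply (ex_derive_ext_loc f g); auto.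
    eapply filter_imp; [|apply (locally_Rabs_lt x0 r y Hy)]. simpl; auto.
  - apply (IH (Derive f)); auto.
    intros y Hy. apply Derive_ext_loc.
    eapply filter_imp; [|apply (locally_Rabs_lt x0 r y Hy)]. simpl; auto.
Qed.

Lemma Cn_ball_shrink n : forall f x0 r x1 r1,
  (forall y, Rabs (y - x1) < r1 -> Rabs (y - x0) < r) ->
  Cn_ball n f x0 r -> Cn_ball n f x1 r1.
Proof.
  induction n as [|n IH]; simpl; auto.
  intros f x0 r x1 r1 Hsub [Hd Hn]. split; eauto.
Qed.

Lemma Cn_ball_pred n : forall f x0 r, Cn_ball (S n) f x0 r -> Cn_ball n f x0 r.
Proof.
  induction n as [|n IH]; simpl; auto.
  intros f x0 r [H1 [H2 H3]]. split; auto. apply IH. simpl. auto.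
Qed.

Lemma Derive_n_S_Derive k : forall f, Derive_n f (S k) = Derive_n (Derive f) k.
Proof.
  induction k as [|k IH]; intros f; simpl; auto.
  apply functional_extensionality. intros x.
  change (Derive (Derive_n f (S k)) x = Derive (Derive_n (Derive f) k) x).
  rewrite IH. auto.
Qed.

Lemma Cn_ball_ex_derive_n n : forall f x0 r, Cn_ball n f x0 r ->
  forall k y, (k <= n)%nat -> Rabs (y - x0) < r -> ex_derive_n f k y.
Proof.
  induction n as [|n IH]; intros f x0 r Hf k y Hk Hy.
  - replace k with 0%nat by lia. exact I.
  - destruct Hf as [Hd Hn]. destruct k as [|[|k]]; simpl; auto.
    change (ex_derive (Derive_n f (S k)) y). rewrite Derive_n_S_Derive.
    change (ex_derive_n (Derive f) (S k) y). eapply IH; eauto. lia.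
Qed.

Lemma Cn_ball_const n : forall c x0 r, Cn_ball n (fun _ => c) x0 r.
Proof.
  induction n as [|n IH]; simpl; auto. intros c x0 r. split.
  - intros; apply ex_derive_const.
  - apply (Cn_ball_ext n (fun _ => 0)); auto. intros; rewrite Derive_const; auto.
Qed.

Lemma Cn_ball_id n : forall x0 r, Cn_ball n (fun x => x) x0 r.
Proof.
  destruct n as [|n]; simpl; auto. intros. split.
  - intros; apply ex_derive_id.
  - apply (Cn_ball_ext n (fun _ => 1)); [|apply Cn_ball_const].
    intros; rewrite Derive_id; auto.
Qed.

Lemma Cn_ball_plus n : forall f g x0 r, Cn_ball n f x0 r -> Cn_ball n g x0 r ->
  Cn_ball n (fun x => f x + g x) x0 r.
Proof.
  induction n as [|n IH]; simpl; auto.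
  intros f g x0 r [Fd Fn] [Gd Gn]. split.
  - intros y Hy. apply (ex_derive_plus f g); auto.
  - apply (Cn_ball_ext n (fun x => Derive f x + Derive g x)); auto.
    intros y Hy. symmetry. apply (Derive_plus f g); auto.
Qed.

Lemma Cn_ball_mult n : forall f g x0 r, Cn_ball n f x0 r -> Cn_ball n g x0 r ->
  Cn_ball n (fun x => f x * g x) x0 r.
Proof.
  induction n as [|n IH]; simpl; auto.
  intros f g x0 r [Fd Fn] [Gd Gn]. split.
  - intros y Hy. apply (ex_derive_mult f g); auto.
  - apply (Cn_ball_ext n (fun x => Derive f x * g x + f x * Derive g x)).
    + intros y Hy. symmetry. apply (Derive_mult f g); auto.
    + apply Cn_ball_plus; apply IH; auto; apply Cn_ball_pred; simpl; auto.
Qed.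

Lemma Cn_ball_comp n : forall f g x0 r y0 r0, Cn_ball n f y0 r0 -> Cn_ball n g x0 r ->
  (forall y, Rabs (y - x0) < r -> Rabs (g y - y0) < r0) ->
  Cn_ball n (fun x => f (g x)) x0 r.
Proof.
  induction n as [|n IH]; simpl; auto.
  intros f g x0 r y0 r0 [Fd Fn] [Gd Gn] Himg. split.
  - intros y Hy. apply (ex_derive_comp f g); auto.
  - apply (Cn_ball_ext n (fun x => Derive g x * Derive f (g x))).
    + intros y Hy. symmetry. apply (Derive_comp f g); auto.
    + apply Cn_ball_mult; auto. eapply IH; eauto.
      apply Cn_ball_pred. simpl; auto.
Qed.

Lemma Cn_ball_inv n : forall x0 r, r <= Rabs x0 -> Cn_ball n (fun x => / x) x0 r.
Proof.
  induction n as [|n IH]; simpl; auto. intros x0 r Hr.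
  assert (Hnz : forall y, Rabs (y - x0) < r -> y <> 0).
  { intros y Hy ->. rewrite Rabs_minus_sym, Rminus_0_r in Hy. lra. }
  split.
  - intros y Hy. apply (ex_derive_inv (fun x => x)); [apply ex_derive_id|]. eauto.
  - apply (Cn_ball_ext n (fun x => (-1) * (/ x * / x))).
    + intros y Hy. symmetry.
      rewrite (Derive_inv (fun x => x)); [|apply ex_derive_id|eauto].
      rewrite Derive_id. field. eauto.
    + apply Cn_ball_mult; [apply Cn_ball_const|]. apply Cn_ball_mult; auto.
Qed.

Lemma Cn_ball_sqrt n : forall x0 r, 0 <= r <= x0 -> Cn_ball n sqrt x0 r.
Proof.
  induction n as [|n IH]; simpl; auto. intros x0 r Hr.
  assert (Hpos : forall y, Rabs (y - x0) < r -> 0 < y).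
  { intros y Hy. apply Rabs_def2 in Hy. lra. }
  split.
  - intros y Hy. eexists. apply (is_derive_sqrt (fun x => x) y 1); auto.
    apply (is_derive_id y).
  - apply (Cn_ball_ext n (fun x => / 2 * (sqrt x * / x))).
    + intros y Hy. symmetry. apply is_derive_unique.
      pose proof (Hpos y Hy) as Hy0.
      assert (Hsq : sqrt y * sqrt y = y) by (apply sqrt_sqrt; lra).
      pose proof (sqrt_lt_R0 y Hy0) as Hs0.
      replace (/ 2 * (sqrt y * / y)) with (1 / (2 * sqrt y)).
      * apply (is_derive_sqrt (fun x => x) y 1); auto. apply (is_derive_id y).
      * replace (/ y) with (/ (sqrt y * sqrt y)) by (rewrite Hsq; auto). field. lra.
    + apply Cn_ball_mult; [apply Cn_ball_const|]. apply Cn_ball_mult; auto.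
      apply Cn_ball_inv. rewrite Rabs_right; lra.
Qed.

Lemma Cn_ball_PSeries n : forall a (r : R), Rbar_le r (CV_radius a) ->
  Cn_ball n (PSeries a) 0 r.
Proof.
  assert (Hin : forall a (r : R) y, Rbar_le r (CV_radius a) -> Rabs (y - 0) < r ->
     Rbar_lt (Rabs y) (CV_radius a)).
  { intros a r y H1 H2. rewrite Rminus_0_r in H2.
    apply (Rbar_lt_le_trans _ (Finite r)); auto. }
  induction n as [|n IH]; simpl; auto. intros a r Hr. split.
  - intros y Hy. apply ex_derive_PSeries. eauto.
  - apply (Cn_ball_ext n (PSeries (PS_derive a))).
    + intros y Hy. symmetry. apply Derive_PSeries. eauto.
    + apply IH. rewrite CV_radius_derive. auto.
Qed.

Definition smooth (f : R -> R) (x0 : R) : Prop :=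
  exists r, 0 < r /\ forall n, Cn_ball n f x0 r.

Lemma smooth_ext (f g : R -> R) (x0 : R) : (forall x, f x = g x) ->
  smooth f x0 -> smooth g x0.
Proof.
  intros Hfg Hf. replace g with f by (apply functional_extensionality; auto). exact Hf.
Qed.

Lemma smooth_const (c x0 : R) : smooth (fun _ => c) x0.
Proof. exists 1; split; [lra|]. intros; apply Cn_ball_const. Qed.

Lemma smooth_id (x0 : R) : smooth (fun x => x) x0.
Proof. exists 1; split; [lra|]. intros; apply Cn_ball_id. Qed.

Lemma smooth_plus (f g : R -> R) (x0 : R) : smooth f x0 -> smooth g x0 ->
  smooth (fun x => f x + g x) x0.
Proof.
  intros [r1 [H1 F]] [r2 [H2 G]]. exists (Rmin r1 r2). split; [apply Rmin_pos; auto|].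
  pose proof (Rmin_l r1 r2). pose proof (Rmin_r r1 r2).
  intros n. apply Cn_ball_plus.
  - apply (Cn_ball_shrink n f x0 r1); auto. intros y Hy. lra.
  - apply (Cn_ball_shrink n g x0 r2); auto. intros y Hy. lra.
Qed.

Lemma smooth_mult (f g : R -> R) (x0 : R) : smooth f x0 -> smooth g x0 ->
  smooth (fun x => f x * g x) x0.
Proof.
  intros [r1 [H1 F]] [r2 [H2 G]]. exists (Rmin r1 r2). split; [apply Rmin_pos; auto|].
  pose proof (Rmin_l r1 r2). pose proof (Rmin_r r1 r2).
  intros n. apply Cn_ball_mult.
  - apply (Cn_ball_shrink n f x0 r1); auto. intros y Hy. lra.
  - apply (Cn_ball_shrink n g x0 r2); auto. intros y Hy. lra.
Qed.

Lemma smooth_opp (f : R -> R) (x0 : R) : smooth f x0 -> smooth (fun x => - f x) x0.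
Proof.
  intros Hf. apply (smooth_ext (fun x => -1 * f x)); [intros; ring|].
  apply smooth_mult; [apply smooth_const|exact Hf].
Qed.

Lemma smooth_minus (f g : R -> R) (x0 : R) : smooth f x0 -> smooth g x0 ->
  smooth (fun x => f x - g x) x0.
Proof. intros Hf Hg. apply smooth_plus; [exact Hf|apply smooth_opp, Hg]. Qed.

Lemma smooth_ex_derive_n_ball (f : R -> R) (x0 : R) : smooth f x0 ->
  exists r, 0 < r /\ forall k y, Rabs (y - x0) < r -> ex_derive_n f k y.
Proof.
  intros [r [Hr F]]. exists r. split; auto.
  intros k y Hy. exact (Cn_ball_ex_derive_n k f x0 r (F k) k y (le_n k) Hy).
Qed.

Lemma smooth_locally_ex_derive (f : R -> R) (x0 : R) : smooth f x0 ->
  locally x0 (ex_derive f).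
Proof.
  intros [r [Hr F]]. destruct (F 1%nat) as [Hd _].
  eapply filter_imp; [exact Hd|]. apply locally_Rabs_lt.
  rewrite Rminus_eq_0, Rabs_R0. exact Hr.
Qed.

Lemma smooth_ex_derive (f : R -> R) (x0 : R) : smooth f x0 -> ex_derive f x0.
Proof. intros Hf. exact (locally_singleton _ _ (smooth_locally_ex_derive f x0 Hf)). Qed.

Lemma smooth_Derive (f : R -> R) (x0 : R) : smooth f x0 -> smooth (Derive f) x0.
Proof. intros [r [Hr F]]. exists r. split; auto. intros n. exact (proj2 (F (S n))). Qed.

Lemma smooth_comp (f g : R -> R) (x0 : R) : smooth f (g x0) -> smooth g x0 ->
  smooth (fun x => f (g x)) x0.
Proof.
  intros [rf [Hf F]] Hg.
  destruct (ex_derive_continuous_ball g x0 (smooth_ex_derive g x0 Hg) rf Hf)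
    as [delta [Hdelta Hcont]].
  destruct Hg as [rg [Hrg G]].
  pose proof (Rmin_l rg delta). pose proof (Rmin_r rg delta).
  exists (Rmin rg delta). split; [apply Rmin_pos; auto|].
  intros n. apply (Cn_ball_comp n f g x0 _ (g x0) rf); auto.
  - apply (Cn_ball_shrink n g x0 rg); auto. intros y Hy. lra.
  - intros y Hy. apply Hcont. lra.
Qed.

Lemma smooth_sqrt (x0 : R) : 0 < x0 -> smooth sqrt x0.
Proof. intros Hx0. exists x0. split; auto. intros n. apply Cn_ball_sqrt. lra. Qed.

Lemma is_lim_seq_0_bounded (u : nat -> R) : is_lim_seq u 0 ->
  exists M, forall n, Rabs (u n) <= M.
Proof.
  intros Hu.
  assert (Hc : Cauchy_crit (fun n => Rabs (u n))).
  { apply CV_Cauchy. exists 0. apply is_lim_seq_Reals.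
    rewrite <- Rabs_R0. exact (is_lim_seq_abs u 0 Hu). }
  destruct (cauchy_bound _ Hc) as [M HM].
  exists M. intros n. apply HM. exists n. reflexivity.
Qed.

Lemma smooth_analytic (f : R -> R) (t0 : R) : analytic_at f t0 -> smooth f t0.
Proof.
  intros [a [r [Hr Hs]]].
  assert (Hrad : Rbar_le (r / 2) (CV_radius a)).
  { apply (proj1 (CV_radius_bounded a)).
    assert (Hin : Rabs (t0 + r / 2 - t0) < r).
    { replace (t0 + r / 2 - t0) with (r / 2) by ring. rewrite Rabs_right; lra. }
    pose proof (Hs _ Hin) as Hser.
    replace (t0 + r / 2 - t0) with (r / 2) in Hser by ring.
    apply is_lim_seq_0_bounded, ex_series_lim_0. eexists; eauto. }
  exists (r / 2). split; [lra|]. intros n.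
  apply (Cn_ball_ext n (fun t => PSeries a (t - t0))).
  - intros y Hy. apply is_series_unique. apply Hs. lra.
  - apply (Cn_ball_comp n (PSeries a) (fun t => t - t0) t0 (r / 2) 0 (r / 2)).
    + apply Cn_ball_PSeries; auto.
    + apply (Cn_ball_plus n (fun x => x) (fun _ => - t0)); [apply Cn_ball_id|apply Cn_ball_const].
    + intros y Hy. rewrite Rminus_0_r. auto.
Qed.

(** * Taylor expansions and orders of vanishing *)

Definition taylor_poly (f : R -> R) (x0 : R) (N : nat) (y : R) : R :=
  sum_f_R0 (fun m => (y - x0) ^ m / INR (Factorial.fact m) * Derive_n f m x0) N.

Lemma taylor_poly_center (f : R -> R) (x0 : R) (N : nat) : taylor_poly f x0 N x0 = f x0.
Proof.
  unfold taylor_poly. induction N as [|N IH]; simpl.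
  - field.
  - rewrite IH, Rminus_eq_0. unfold Rdiv. rewrite !Rmult_0_l. ring.
Qed.

Lemma taylor_poly_flat (f : R -> R) (x0 : R) (N : nat) (y : R) :
  (forall i, (1 <= i <= N)%nat -> Derive_n f i x0 = 0) -> taylor_poly f x0 N y = f x0.
Proof.
  unfold taylor_poly. induction N as [|N IH]; intros Hflat.
  - simpl. field.
  - cbn [sum_f_R0]. rewrite IH by (intros; apply Hflat; lia).
    rewrite (Hflat (S N)) by lia. ring.
Qed.

Lemma taylor_poly_reflect (f : R -> R) (x0 : R) (N : nat) (y : R) : smooth f x0 ->
  taylor_poly (fun u => f (-1 * u)) (- x0) N (- y) = taylor_poly f x0 N y.
Proof.
  intros Hf. destruct (smooth_ex_derive_n_ball f x0 Hf) as [r [Hr Hn]].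
  unfold taylor_poly. apply sum_eq. intros i _.
  rewrite Derive_n_comp_scal.
  - replace (-1 * - x0) with x0 by ring.
    replace (- y - - x0) with (-1 * (y - x0)) by ring.
    rewrite Rpow_mult_distr.
    assert (Hsign : (-1) ^ i * (-1) ^ i = 1).
    { rewrite <- Rpow_mult_distr. replace (-1 * -1) with 1 by ring. apply pow1. }
    transitivity ((-1) ^ i * (-1) ^ i *
      ((y - x0) ^ i / INR (Factorial.fact i) * Derive_n f i x0)); [field|rewrite Hsign; ring].
    apply INR_fact_neq_0.
  - replace (-1 * - x0) with x0 by ring.
    eapply filter_imp; [|apply (locally_Rabs_lt x0 r x0)].
    + intros z Hz k _. exact (Hn k z Hz).
    + rewrite Rminus_eq_0, Rabs_R0. exact Hr.
Qed.

Lemma smooth_Derive_n_bounded (f : R -> R) (x0 : R) (N : nat) : smooth f x0 ->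
  exists M delta, 0 < delta /\
    forall z, Rabs (z - x0) < delta -> Rabs (Derive_n f N z) <= M.
Proof.
  intros Hf. destruct (smooth_ex_derive_n_ball f x0 Hf) as [r [Hr Hn]].
  assert (Hd : ex_derive (Derive_n f N) x0).
  { apply (Hn (S N) x0). rewrite Rminus_eq_0, Rabs_R0. exact Hr. }
  destruct (ex_derive_continuous_ball _ x0 Hd 1 Rlt_0_1) as [delta [Hdelta Hcont]].
  exists (Rabs (Derive_n f N x0) + 1), delta. split; auto.
  intros z Hz. pose proof (Hcont z Hz).
  pose proof (Rabs_triang_inv (Derive_n f N z) (Derive_n f N x0)). lra.
Qed.

Lemma taylor_remainder_right (f : R -> R) (x0 : R) (N : nat) : smooth f x0 ->
  exists C delta, 0 < delta /\ forall y, x0 < y < x0 + delta ->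
    Rabs (f y - taylor_poly f x0 N y) <= C * (y - x0) ^ (S N).
Proof.
  intros Hf.
  destruct (smooth_ex_derive_n_ball f x0 Hf) as [r [Hr Hn]].
  destruct (smooth_Derive_n_bounded f x0 (S N) Hf) as [M [delta [Hdelta HM]]].
  set (F := INR (Factorial.fact (S N))).
  assert (HF : 0 < F) by apply INR_fact_lt_0.
  exists (M / F), (Rmin r delta). split; [apply Rmin_pos; auto|].
  intros y Hy. pose proof (Rmin_l r delta). pose proof (Rmin_r r delta).
  destruct (Taylor_Lagrange f N x0 y) as [z [Hz ->]]; [lra| |].
  { intros t Ht k _. apply Hn. rewrite Rabs_right; lra. }
  unfold taylor_poly. fold F.
  match goal with |- Rabs (?A + ?B - ?A) <= _ => replace (A + B - A) with B by ring end.
  assert (Hh : 0 <= (y - x0) ^ S N) by (apply pow_le; lra).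
  assert (Hz' : Rabs (Derive_n f (S N) z) <= M) by (apply HM; rewrite Rabs_right; lra).
  rewrite Rabs_mult, (Rabs_right ((y - x0) ^ S N / F))
    by (apply Rle_ge, Rdiv_le_0_compat; lra).
  apply Rle_trans with ((y - x0) ^ S N / F * M).
  - apply Rmult_le_compat_l; auto. apply Rdiv_le_0_compat; lra.
  - right. field. lra.
Qed.

Lemma taylor_remainder (f : R -> R) (x0 : R) (N : nat) : smooth f x0 ->
  exists C delta, 0 < delta /\ forall y, Rabs (y - x0) < delta ->
    Rabs (f y - taylor_poly f x0 N y) <= C * Rabs (y - x0) ^ (S N).
Proof.
  intros Hf.
  set (g := fun u => f (-1 * u)).
  assert (Hg : smooth g (- x0)).
  { apply (smooth_comp f (fun u => -1 * u)).
    - replace (-1 * - x0) with x0 by ring. exact Hf.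
    - apply smooth_mult; [apply smooth_const|apply smooth_id]. }
  destruct (taylor_remainder_right f x0 N Hf) as [C1 [d1 [Hd1 Hright]]].
  destruct (taylor_remainder_right g (- x0) N Hg) as [C2 [d2 [Hd2 Hleft]]].
  pose proof (Rmin_l d1 d2). pose proof (Rmin_r d1 d2).
  pose proof (Rle_abs C1). pose proof (Rle_abs C2).
  pose proof (Rabs_pos C1). pose proof (Rabs_pos C2).
  exists (Rabs C1 + Rabs C2), (Rmin d1 d2). split; [apply Rmin_pos; auto|].
  intros y Hy.
  assert (Hp : 0 <= Rabs (y - x0) ^ S N) by (apply pow_le, Rabs_pos).
  destruct (Rtotal_order y x0) as [Hlt|[->|Hgt]].
  - rewrite (Rabs_left (y - x0)) in Hy, Hp |- * by lra.
    pose proof (Hleft (- y) ltac:(lra)) as Hb.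
    unfold g in Hb. rewrite (taylor_poly_reflect f x0 N y Hf) in Hb.
    replace (-1 * - y) with y in Hb by ring.
    replace (- y - - x0) with (- (y - x0)) in Hb by ring.
    apply Rle_trans with (1 := Hb). apply Rmult_le_compat_r; auto. lra.
  - rewrite taylor_poly_center, !Rminus_eq_0, Rabs_R0, pow_i by lia. lra.
  - rewrite (Rabs_right (y - x0)) in Hy, Hp |- * by lra.
    apply Rle_trans with (1 := Hright y ltac:(lra)). apply Rmult_le_compat_r; auto. lra.
Qed.

Definition bigO (N : nat) (f : R -> R) : Prop :=
  exists C delta, 0 < delta /\ forall t, 0 < t < delta -> Rabs (f t) <= C * t ^ N.

Lemma bigO_ext (N : nat) (f g : R -> R) : bigO N f -> (forall t, 0 < t -> f t = g t) ->
  bigO N g.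
Proof.
  intros [C [delta [Hdelta Hf]]] Hfg. exists C, delta. split; auto.
  intros t Ht. rewrite <- Hfg by lra. auto.
Qed.

Lemma bigO_plus (N : nat) (f g : R -> R) : bigO N f -> bigO N g ->
  bigO N (fun t => f t + g t).
Proof.
  intros [C1 [d1 [Hd1 H1]]] [C2 [d2 [Hd2 H2]]]. exists (C1 + C2), (Rmin d1 d2).
  split; [apply Rmin_pos; auto|]. intros t Ht.
  pose proof (Rmin_l d1 d2). pose proof (Rmin_r d1 d2).
  pose proof (H1 t ltac:(lra)). pose proof (H2 t ltac:(lra)).
  pose proof (Rabs_triang (f t) (g t)). lra.
Qed.

Lemma bigO_scal (N : nat) (c : R) (f : R -> R) : bigO N f -> bigO N (fun t => c * f t).
Proof.
  intros [C [delta [Hdelta Hf]]]. exists (Rabs c * C), delta. split; auto.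
  intros t Ht. rewrite Rabs_mult, Rmult_assoc.
  apply Rmult_le_compat_l; [apply Rabs_pos|auto].
Qed.

Lemma bigO_minus (N : nat) (f g : R -> R) : bigO N f -> bigO N g ->
  bigO N (fun t => f t - g t).
Proof.
  intros Hf Hg. apply (bigO_ext N (fun t => f t + -1 * g t)); [|intros; ring].
  apply bigO_plus; [exact Hf|apply bigO_scal, Hg].
Qed.

Lemma bigO_weaken (a b : nat) (f : R -> R) : (b <= a)%nat -> bigO a f -> bigO b f.
Proof.
  intros Hab [C [delta [Hdelta Hf]]]. exists (Rabs C), (Rmin delta 1).
  split; [apply Rmin_pos; lra|]. intros t Ht.
  pose proof (Rmin_l delta 1). pose proof (Rmin_r delta 1).
  assert (Hpow : t ^ a <= t ^ b).
  { replace a with (b + (a - b))%nat by lia. rewrite pow_add.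
    pose proof (pow_le t b ltac:(lra)).
    pose proof (pow_incr t 1 (a - b) ltac:(lra)) as Hle1. rewrite pow1 in Hle1.
    pose proof (pow_le t (a - b) ltac:(lra)). nra. }
  pose proof (Hf t ltac:(lra)). pose proof (pow_le t a ltac:(lra)).
  pose proof (Rle_abs C). pose proof (Rabs_pos C).
  apply Rle_trans with (Rabs C * t ^ a); [nra|]. apply Rmult_le_compat_l; auto.
Qed.

Lemma bigO_mult (a b : nat) (f g : R -> R) : bigO a f -> bigO b g ->
  bigO (a + b) (fun t => f t * g t).
Proof.
  intros [C1 [d1 [Hd1 H1]]] [C2 [d2 [Hd2 H2]]]. exists (C1 * C2), (Rmin d1 d2).
  split; [apply Rmin_pos; auto|]. intros t Ht.
  pose proof (Rmin_l d1 d2). pose proof (Rmin_r d1 d2).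
  rewrite Rabs_mult, pow_add.
  replace (C1 * C2 * (t ^ a * t ^ b)) with ((C1 * t ^ a) * (C2 * t ^ b)) by ring.
  apply Rmult_le_compat; try apply Rabs_pos; [apply H1|apply H2]; lra.
Qed.

Lemma bigO_monomial (m : nat) (c : R) : bigO m (fun t => c * t ^ m).
Proof.
  exists (Rabs c), 1. split; [lra|]. intros t Ht.
  rewrite Rabs_mult, (Rabs_right (t ^ m)); [lra|]. apply Rle_ge, pow_le; lra.
Qed.

Lemma bigO_monomial_coef (m : nat) (c : R) : bigO (S m) (fun t => c * t ^ m) -> c = 0.
Proof.
  intros [C [delta [Hdelta Hc]]].
  destruct (Req_dec c 0) as [|Hnz]; auto. exfalso.
  assert (Ha : 0 < Rabs c) by (apply Rabs_pos_lt; auto).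
  pose proof (Rabs_pos C). pose proof (Rle_abs C).
  set (t := Rmin (delta / 2) (Rabs c / (2 * (Rabs C + 1)))).
  assert (Ht : 0 < t) by (apply Rmin_pos; [lra|apply Rdiv_lt_0_compat; lra]).
  assert (Ht1 : t <= delta / 2) by apply Rmin_l.
  assert (Ht2 : t * (2 * (Rabs C + 1)) <= Rabs c).
  { apply (Rmult_le_reg_r (/ (2 * (Rabs C + 1)))); [apply Rinv_0_lt_compat; lra|].
    rewrite Rmult_assoc, Rinv_r, Rmult_1_r by lra. apply Rmin_r. }
  pose proof (Hc t ltac:(lra)) as Hb.
  rewrite Rabs_mult, (Rabs_right (t ^ m)) in Hb by (apply Rle_ge, pow_le; lra).
  simpl in Hb. pose proof (pow_lt t m Ht).
  assert (Rabs c <= C * t) by (apply (Rmult_le_reg_r (t ^ m)); auto; lra).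
  nra.
Qed.

Lemma bigO_small (m : nat) (f : R -> R) : (1 <= m)%nat -> bigO m f ->
  forall eps, 0 < eps -> exists delta, 0 < delta /\
    forall t, 0 < t < delta -> Rabs (f t) < eps.
Proof.
  intros Hm Hf eps Heps.
  destruct (bigO_weaken m 1 f Hm Hf) as [C [d [Hd H]]].
  pose proof (Rabs_pos C). pose proof (Rle_abs C).
  exists (Rmin d (eps / (Rabs C + 1))).
  split; [apply Rmin_pos; auto; apply Rdiv_lt_0_compat; lra|].
  intros t Ht. pose proof (Rmin_l d (eps / (Rabs C + 1))).
  pose proof (Rmin_r d (eps / (Rabs C + 1))).
  pose proof (H t ltac:(lra)) as Hb. simpl in Hb. rewrite Rmult_1_r in Hb.
  assert (t * (Rabs C + 1) < eps).
  { apply (Rmult_lt_reg_r (/ (Rabs C + 1))); [apply Rinv_0_lt_compat; lra|].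
    rewrite Rmult_assoc, Rinv_r by lra. lra. }
  nra.
Qed.

Definition taylor_coef (f : R -> R) (x0 : R) (m : nat) : R :=
  Derive_n f m x0 / INR (Factorial.fact m).

Lemma taylor_coef_eq0 (f : R -> R) (x0 : R) (m : nat) :
  taylor_coef f x0 m = 0 -> Derive_n f m x0 = 0.
Proof.
  unfold taylor_coef. intros Hc.
  replace (Derive_n f m x0) with (Derive_n f m x0 / INR (Factorial.fact m) * INR (Factorial.fact m))
    by (field; apply INR_fact_neq_0).
  rewrite Hc. ring.
Qed.

Lemma k_vanishing_S (f : R -> R) (m : nat) :
  k_vanishing f (S m) <-> k_vanishing f m /\ Derive_n f (S m) 0 = 0.
Proof.
  split.
  - intros Hf. split; [intros i Hi; apply Hf; lia|apply Hf; lia].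
  - intros [Hf Hm] i Hi. destruct (Nat.eq_dec i (S m)) as [->|]; auto. apply Hf. lia.
Qed.

Lemma bigO_taylor_leading (f : R -> R) (m : nat) : smooth f 0 -> k_vanishing f m ->
  bigO (S (S m)) (fun t => f t - f 0 - taylor_coef f 0 (S m) * t ^ S m).
Proof.
  intros Hf Hm. destruct (taylor_remainder f 0 (S m) Hf) as [C [delta [Hdelta Hrem]]].
  exists C, delta. split; auto. intros t Ht.
  assert (Hpoly : taylor_poly f 0 (S m) t = f 0 + taylor_coef f 0 (S m) * t ^ S m).
  { unfold taylor_poly. cbn [sum_f_R0]. fold (taylor_poly f 0 m t).
    rewrite taylor_poly_flat by exact Hm. unfold taylor_coef. rewrite Rminus_0_r.
    unfold Rdiv. ring. }
  assert (Ht' : Rabs (t - 0) < delta) by (rewrite Rminus_0_r, Rabs_right; lra).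
  pose proof (Hrem t Ht') as Hb. rewrite Hpoly in Hb.
  rewrite Rminus_0_r, (Rabs_right t) in Hb by lra.
  replace (f t - f 0 - taylor_coef f 0 (S m) * t ^ S m)
    with (f t - (f 0 + taylor_coef f 0 (S m) * t ^ S m)) by ring.
  exact Hb.
Qed.

Lemma k_vanishing_bigO (f : R -> R) (m : nat) : smooth f 0 ->
  k_vanishing f m <-> bigO (S m) (fun t => f t - f 0).
Proof.
  intros Hf. induction m as [|m IH].
  - split; [intros _|intros _ i Hi; lia].
    pose proof (bigO_taylor_leading f 0 Hf ltac:(intros i Hi; lia)) as Hlead.
    apply (bigO_ext 1 (fun t => (f t - f 0 - taylor_coef f 0 1 * t ^ 1)
                                + taylor_coef f 0 1 * t ^ 1)); [|intros; ring].
    apply bigO_plus; [exact (bigO_weaken 2 1 _ ltac:(lia) Hlead)|apply bigO_monomial].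
  - rewrite k_vanishing_S. split.
    + intros [Hm Hd].
      apply (bigO_ext _ _ _ (bigO_taylor_leading f m Hf Hm)). intros t _.
      unfold taylor_coef. rewrite Hd. unfold Rdiv. ring.
    + intros HO.
      assert (Hm : k_vanishing f m) by (apply IH, (bigO_weaken (S (S m))); auto).
      split; auto. apply (taylor_coef_eq0 f 0 (S m)), (bigO_monomial_coef (S m)).
      apply (bigO_ext _ _ _ (bigO_minus _ _ _ HO (bigO_taylor_leading f m Hf Hm))).
      intros t _. ring.
Qed.

(** * Composition with a nondegenerate critical point *)

Lemma Derive_strict_local_min (F : R -> R) (x0 : R) : ex_derive F x0 ->
  (exists delta, 0 < delta /\ forall x, 0 < Rabs (x - x0) < delta -> F x0 < F x) ->
  Derive F x0 = 0.
Proof.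
  intros Hd [delta [Hdelta Hmin]].
  rewrite <- (Derive_Reals F x0 (ex_derive_Reals_0 F x0 Hd)).
  apply (deriv_minimum F (x0 - delta) (x0 + delta)); try lra.
  intros x H1 H2. destruct (Req_dec x x0) as [->|Hne]; [lra|].
  apply Rlt_le, Hmin. split; [apply Rabs_pos_lt; lra|]. apply Rabs_def1; lra.
Qed.

Lemma Derive2_comp_critical (F g : R -> R) (x0 : R) :
  smooth F (g x0) -> smooth g x0 -> Derive F (g x0) = 0 ->
  Derive_n (fun x => F (g x)) 2 x0 = Derive g x0 ^ 2 * Derive_n F 2 (g x0).
Proof.
  intros HF Hg HF1.
  pose proof (smooth_ex_derive _ _ (smooth_Derive F (g x0) HF)) as HDF.
  pose proof (smooth_ex_derive _ _ (smooth_Derive g x0 Hg)) as HDg.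
  pose proof (smooth_ex_derive g x0 Hg) as Hg1.
  assert (HFg : locally x0 (fun y => ex_derive F (g y))).
  { exact (ex_derive_continuous g x0 Hg1 _ (smooth_locally_ex_derive F (g x0) HF)). }
  change (Derive (Derive (fun x => F (g x))) x0 = Derive g x0 ^ 2 * Derive (Derive F) (g x0)).
  rewrite (Derive_ext_loc _ (fun y => Derive g y * Derive F (g y))).
  - rewrite Derive_mult, (Derive_comp (Derive F) g), HF1; auto.
    + simpl. ring.
    + apply ex_derive_comp; auto.
  - eapply filter_imp; [|exact (filter_and _ _ HFg (smooth_locally_ex_derive g x0 Hg))].
    intros y [HFy Hgy]. apply Derive_comp; auto.
Qed.

Lemma taylor_quadratic (phi : R -> R) (x0 : R) : smooth phi x0 -> Derive phi x0 = 0 ->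
  exists C delta, 0 < delta /\ forall y, Rabs (y - x0) < delta ->
    Rabs (phi y - phi x0 - taylor_coef phi x0 2 * (y - x0) ^ 2) <= C * Rabs (y - x0) ^ 3.
Proof.
  intros Hphi Hd. destruct (taylor_remainder phi x0 2 Hphi) as [C [delta [Hdelta Hrem]]].
  exists C, delta. split; auto. intros y Hy.
  replace (phi y - phi x0 - taylor_coef phi x0 2 * (y - x0) ^ 2)
    with (phi y - taylor_poly phi x0 2 y); [apply Hrem; auto|].
  unfold taylor_poly, taylor_coef. cbn [sum_f_R0].
  change (Derive_n phi 1 x0) with (Derive phi x0). change (Derive_n phi 0 x0) with (phi x0).
  rewrite Hd. simpl (INR (Factorial.fact 0)).
  field. split; apply INR_fact_neq_0.
Qed.

Lemma bigO_comp_critical (phi s : R -> R) (x0 : R) (m : nat) :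
  smooth phi x0 -> Derive phi x0 = 0 -> (1 <= m)%nat -> bigO m (fun t => s t - x0) ->
  bigO (3 * m) (fun t => phi (s t) - phi x0 - taylor_coef phi x0 2 * (s t - x0) ^ 2).
Proof.
  intros Hphi Hd Hm Hs.
  destruct (taylor_quadratic phi x0 Hphi Hd) as [C1 [d1 [Hd1 Hq]]].
  destruct (bigO_small m _ Hm Hs d1 Hd1) as [d2 [Hd2 Hsmall]].
  destruct Hs as [C [d0 [Hd0 Hs]]].
  exists (Rabs C1 * Rabs C ^ 3), (Rmin d0 d2). split; [apply Rmin_pos; auto|].
  intros t Ht. pose proof (Rmin_l d0 d2). pose proof (Rmin_r d0 d2).
  assert (Hu : Rabs (s t - x0) <= Rabs C * t ^ m).
  { pose proof (Hs t ltac:(lra)). pose proof (Rle_abs C).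
    pose proof (pow_le t m ltac:(lra)). nra. }
  assert (Hu3 : Rabs (s t - x0) ^ 3 <= Rabs C ^ 3 * t ^ (3 * m)).
  { rewrite Nat.mul_comm, pow_mult, <- Rpow_mult_distr.
    apply pow_incr. split; [apply Rabs_pos|auto]. }
  apply Rle_trans with (1 := Hq (s t) (Hsmall t ltac:(lra))).
  pose proof (Rle_abs C1). pose proof (Rabs_pos C1).
  pose proof (pow_le (Rabs (s t - x0)) 3 (Rabs_pos _)).
  apply Rle_trans with (Rabs C1 * Rabs (s t - x0) ^ 3); [nra|].
  rewrite Rmult_assoc. apply Rmult_le_compat_l; auto.
Qed.

Lemma bigO_comp_critical_flat (phi s : R -> R) (k : nat) :
  smooth s 0 -> smooth phi (s 0) -> Derive phi (s 0) = 0 -> k_vanishing s k ->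
  bigO (2 * k + 2) (fun t => phi (s t) - phi (s 0)).
Proof.
  intros Hs Hphi Hd Hk.
  pose proof (proj1 (k_vanishing_bigO s k Hs) Hk) as Hu.
  pose proof (bigO_comp_critical phi s (s 0) (S k) Hphi Hd ltac:(lia) Hu) as Hc.
  pose proof (bigO_scal _ (taylor_coef phi (s 0) 2) _ (bigO_mult _ _ _ _ Hu Hu)) as Hq.
  apply (bigO_ext _ (fun t =>
      (phi (s t) - phi (s 0) - taylor_coef phi (s 0) 2 * (s t - s 0) ^ 2)
      + taylor_coef phi (s 0) 2 * ((s t - s 0) * (s t - s 0)))); [|intros; ring].
  apply bigO_plus; [apply (bigO_weaken (3 * S k))|apply (bigO_weaken (S k + S k))];
    auto; lia.
Qed.

Lemma bigO_comp_critical_leading (phi s : R -> R) (m : nat) :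
  smooth s 0 -> smooth phi (s 0) -> Derive phi (s 0) = 0 -> k_vanishing s m ->
  bigO (2 * S m + 1) (fun t => phi (s t) - phi (s 0)
    - taylor_coef phi (s 0) 2 * taylor_coef s 0 (S m) ^ 2 * t ^ (2 * S m)).
Proof.
  intros Hs Hphi Hd Hm.
  set (a := taylor_coef phi (s 0) 2). set (c := taylor_coef s 0 (S m)).
  pose proof (bigO_taylor_leading s m Hs Hm) as Hlead. fold c in Hlead.
  assert (Hu : bigO (S m) (fun t => s t - s 0)).
  { apply (bigO_ext _ (fun t => (s t - s 0 - c * t ^ S m) + c * t ^ S m)); [|intros; ring].
    apply bigO_plus; [apply (bigO_weaken (S (S m))); auto|apply bigO_monomial]. }
  pose proof (bigO_comp_critical phi s (s 0) (S m) Hphi Hd ltac:(lia) Hu) as Hc.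
  pose proof (bigO_mult _ _ _ _ Hlead (bigO_plus _ _ _ Hu (bigO_monomial (S m) c))) as Hsq.
  apply (bigO_ext _ (fun t => (phi (s t) - phi (s 0) - a * (s t - s 0) ^ 2)
     + a * ((s t - s 0 - c * t ^ S m) * ((s t - s 0) + c * t ^ S m)))).
  - apply bigO_plus; [apply (bigO_weaken (3 * S m))|apply (bigO_weaken (S (S m) + S m))];
      auto using bigO_scal; lia.
  - intros t _. replace (2 * S m)%nat with (S m + S m)%nat by lia. rewrite pow_add. ring.
Qed.

(** * Bar energies *)

Definition lsum {I : Type} (L : list I) (f : I -> R) : R := fold_right Rplus 0 (map f L).

Lemma lsum_minus {I : Type} (L : list I) (f g : I -> R) :
  lsum L (fun e => f e - g e) = lsum L f - lsum L g.
Proof. unfold lsum. induction L as [|e L IH]; simpl; [ring|rewrite IH; ring]. Qed.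

Lemma lsum_mult_r {I : Type} (L : list I) (f : I -> R) (c : R) :
  lsum L (fun e => f e * c) = lsum L f * c.
Proof. unfold lsum. induction L as [|e L IH]; simpl; [ring|rewrite IH; ring]. Qed.

Lemma lsum_nonneg {I : Type} (L : list I) (f : I -> R) :
  (forall e, In e L -> 0 <= f e) -> 0 <= lsum L f.
Proof.
  unfold lsum. induction L as [|e L IH]; simpl; intros Hf; [lra|].
  pose proof (Hf e (or_introl eq_refl)). pose proof (IH (fun e' He' => Hf e' (or_intror He'))).
  lra.
Qed.

Lemma lsum_nonneg_eq0 {I : Type} (L : list I) (f : I -> R) :
  (forall e, In e L -> 0 <= f e) -> lsum L f = 0 -> forall e, In e L -> f e = 0.
Proof.
  induction L as [|e L IH]; intros Hf Hsum e' He'; [destruct He'|].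
  change (f e + lsum L f = 0) in Hsum.
  pose proof (Hf e (or_introl eq_refl)).
  pose proof (lsum_nonneg L f (fun e'' He'' => Hf e'' (or_intror He''))).
  destruct He' as [<-|He']; [lra|].
  apply IH; auto; [intros; apply Hf; right; auto|lra].
Qed.

Lemma smooth_lsum {I : Type} (L : list I) (f : I -> R -> R) (x0 : R) :
  (forall e, In e L -> smooth (f e) x0) -> smooth (fun t => lsum L (fun e => f e t)) x0.
Proof.
  induction L as [|e L IH]; intros Hf; [exact (smooth_const 0 x0)|].
  exact (smooth_plus _ _ x0 (Hf e (or_introl eq_refl))
           (IH (fun e' He' => Hf e' (or_intror He')))).
Qed.

Lemma bigO_lsum {I : Type} (L : list I) (f : I -> R -> R) (N : nat) :
  (forall e, In e L -> bigO N (f e)) -> bigO N (fun t => lsum L (fun e => f e t)).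
Proof.
  induction L as [|e L IH]; intros Hf.
  - apply (bigO_ext _ _ _ (bigO_monomial N 0)). intros t _. unfold lsum. simpl. ring.
  - exact (bigO_plus _ _ _ (Hf e (or_introl eq_refl))
             (IH (fun e' He' => Hf e' (or_intror He')))).
Qed.

Lemma taylor_coef_pos (f : R -> R) (x0 : R) (m : nat) :
  0 < Derive_n f m x0 -> 0 < taylor_coef f x0 m.
Proof. intros Hd. apply Rdiv_lt_0_compat; [exact Hd|apply INR_fact_lt_0]. Qed.

Definition bar_energy {I : Type} (L : list I) (s phi : I -> R -> R) (t : R) : R :=
  lsum L (fun e => phi e (s e t)).

Section BarEnergy.

Variables (I : Type) (L : list I) (s phi : I -> R -> R).
Hypothesis s_smooth : forall e, In e L -> smooth (s e) 0.
Hypothesis phi_smooth : forall e, In e L -> smooth (phi e) (s e 0).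
Hypothesis phi_critical : forall e, In e L -> Derive (phi e) (s e 0) = 0.
Hypothesis phi_convex : forall e, In e L -> 0 < Derive_n (phi e) 2 (s e 0).

Lemma smooth_bar_energy : smooth (bar_energy L s phi) 0.
Proof.
  apply smooth_lsum. intros e He. apply smooth_comp; auto.
Qed.

Lemma bar_energy_vanishing k : (forall e, In e L -> k_vanishing (s e) k) ->
  k_vanishing (bar_energy L s phi) (2 * k + 1).
Proof.
  intros Hk. apply (k_vanishing_bigO _ _ smooth_bar_energy).
  replace (S (2 * k + 1)) with (2 * k + 2)%nat by lia.
  apply (bigO_ext _ _ _ (bigO_lsum L (fun e t => phi e (s e t) - phi e (s e 0)) _
           (fun e He => bigO_comp_critical_flat (phi e) (s e) k (s_smooth e He)
                          (phi_smooth e He) (phi_critical e He) (Hk e He)))).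
  intros t _. unfold bar_energy. rewrite lsum_minus. reflexivity.
Qed.

Lemma bar_energy_leading m : (forall e, In e L -> k_vanishing (s e) m) ->
  bigO (2 * S m + 1) (fun t => bar_energy L s phi t - bar_energy L s phi 0
    - lsum L (fun e => taylor_coef (phi e) (s e 0) 2 * taylor_coef (s e) 0 (S m) ^ 2)
      * t ^ (2 * S m)).
Proof.
  intros Hm.
  apply (bigO_ext _ _ _ (bigO_lsum L _ _
           (fun e He => bigO_comp_critical_leading (phi e) (s e) m (s_smooth e He)
                          (phi_smooth e He) (phi_critical e He) (Hm e He)))).
  intros t _. unfold bar_energy. rewrite !lsum_minus, lsum_mult_r. reflexivity.
Qed.

Lemma bars_vanishing_of_energy k : k_vanishing (bar_energy L s phi) (2 * k) ->
  forall e, In e L -> k_vanishing (s e) k.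
Proof.
  intros HE.
  pose proof (proj1 (k_vanishing_bigO _ _ smooth_bar_energy) HE) as Hflat.
  enough (Hall : forall m, (m <= k)%nat -> forall e, In e L -> k_vanishing (s e) m)
    by (apply Hall; lia).
  induction m as [|m IH]; intros Hmk; [intros e _ i Hi; lia|].
  assert (Hprev : forall e, In e L -> k_vanishing (s e) m) by (apply IH; lia).
  set (A := fun e => taylor_coef (phi e) (s e 0) 2 * taylor_coef (s e) 0 (S m) ^ 2).
  assert (HA0 : forall e, In e L -> 0 <= A e).
  { intros e He. apply Rmult_le_pos; [|apply pow2_ge_0].
    apply Rlt_le, taylor_coef_pos, phi_convex, He. }
  assert (Hsum : lsum L A = 0).
  { apply (bigO_monomial_coef (2 * S m)).
    apply (bigO_ext _ (fun t => (bar_energy L s phi t - bar_energy L s phi 0)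
      - (bar_energy L s phi t - bar_energy L s phi 0 - lsum L A * t ^ (2 * S m))));
      [|intros; ring].
    apply bigO_minus; [apply (bigO_weaken (S (2 * k))); auto; lia|].
    replace (S (2 * S m)) with (2 * S m + 1)%nat by lia.
    exact (bar_energy_leading m Hprev). }
  intros e He. apply k_vanishing_S. split; [exact (Hprev e He)|].
  apply taylor_coef_eq0.
  pose proof (lsum_nonneg_eq0 L A HA0 Hsum e He) as HAe. unfold A in HAe.
  pose proof (taylor_coef_pos _ _ 2 (phi_convex e He)).
  apply Rmult_integral in HAe as [Ha|Hc]; [lra|].
  destruct (Req_dec (taylor_coef (s e) 0 (S m)) 0) as [|Hnz]; auto.
  exfalso. exact (pow_nonzero _ 2 Hnz Hc).
Qed.

End BarEnergy.

Lemma sqdist_nonneg (d : nat) (x y : point) : 0 <= sqdist d x y.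
Proof.
  unfold sqdist. induction d as [|d IH]; cbn [sumn_R]; [lra|].
  pose proof (pow2_ge_0 (x d - y d)). lra.
Qed.

Lemma sqdist_pos (d : nat) (x y : point) :
  (exists c, (c < d)%nat /\ x c <> y c) -> 0 < sqdist d x y.
Proof.
  induction d as [|d IH]; intros [c [Hc Hxy]]; [lia|].
  change (0 < sqdist d x y + (x d - y d) ^ 2).
  pose proof (sqdist_nonneg d x y). pose proof (pow2_ge_0 (x d - y d)).
  destruct (Nat.eq_dec c d) as [->|Hne].
  - pose proof (pow_nonzero (x d - y d) 2 ltac:(lra)). lra.
  - assert (0 < sqdist d x y) by (apply IH; exists c; split; auto; lia). lra.
Qed.

Lemma sqdist_ext (d : nat) (x y x' y' : point) :
  (forall c, (c < d)%nat -> x c = x' c) -> (forall c, (c < d)%nat -> y c = y' c) ->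
  sqdist d x y = sqdist d x' y'.
Proof.
  unfold sqdist. induction d as [|d IH]; intros Hx Hy; cbn [sumn_R]; auto.
  rewrite IH, Hx, Hy by (intros; auto; lia). reflexivity.
Qed.

Lemma smooth_sqdist (d : nat) (X Y : R -> point) (t0 : R) :
  (forall c, (c < d)%nat -> smooth (fun t => X t c) t0) ->
  (forall c, (c < d)%nat -> smooth (fun t => Y t c) t0) ->
  smooth (fun t => sqdist d (X t) (Y t)) t0.
Proof.
  induction d as [|d IH]; intros HX HY; [exact (smooth_const 0 t0)|].
  assert (Hdiff : smooth (fun t => X t d - Y t d) t0) by (apply smooth_minus; auto).
  apply smooth_plus.
  - apply IH; auto.
  - exact (smooth_mult _ _ t0 Hdiff (smooth_mult _ _ t0 Hdiff (smooth_const 1 t0))).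
Qed.

Lemma comp_sqrt_nondegenerate_min (F : R -> R) (x0 : R) : 0 < x0 ->
  analytic_at F (sqrt x0) ->
  (exists delta, 0 < delta /\ forall x, 0 < Rabs (x - sqrt x0) < delta -> F (sqrt x0) < F x) ->
  0 < Derive_n F 2 (sqrt x0) ->
  smooth (fun x => F (sqrt x)) x0 /\ Derive (fun x => F (sqrt x)) x0 = 0 /\
  0 < Derive_n (fun x => F (sqrt x)) 2 x0.
Proof.
  intros Hx0 Han Hmin HF2.
  pose proof (smooth_analytic F _ Han) as HF.
  pose proof (smooth_sqrt x0 Hx0) as Hsqrt.
  pose proof (sqrt_lt_R0 x0 Hx0) as Hs0.
  assert (HF1 : Derive F (sqrt x0) = 0).
  { apply Derive_strict_local_min; auto. apply smooth_ex_derive, HF. }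
  assert (Hd : Derive sqrt x0 = 1 / (2 * sqrt x0)).
  { apply is_derive_unique. exact (is_derive_sqrt (fun x => x) x0 1 (is_derive_id x0) Hx0). }
  split; [|split].
  - apply smooth_comp; auto.
  - rewrite Derive_comp; [rewrite HF1; ring|apply smooth_ex_derive; auto..].
  - rewrite Derive2_comp_critical; auto. apply Rmult_lt_0_compat; auto.
    apply pow_lt. rewrite Hd. apply Rdiv_lt_0_compat; lra.
Qed.

Lemma trajectory_smooth (n d l : nat) (p : config) (P : R -> config) :
  trajectory n d l p P ->
  forall i c, (i < n)%nat -> (c < d)%nat -> smooth (fun t => P t i c) 0.
Proof.
  intros [eps [Heps [_ [_ [Han _]]]]] i c Hi Hc.
  apply smooth_analytic, Han; auto. lra.
Qed.

Definition bar_sqlength (d : nat) (P : R -> config) (e : nat * nat) (t : R) : R :=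
  sqdist d (P t (fst e)) (P t (snd e)).

Definition bar_potential (Eb : nat -> nat -> R -> R) (e : nat * nat) (x : R) : R :=
  Eb (fst e) (snd e) (sqrt x).

Section Framework.

Variables (n d l : nat) (E : list (nat * nat)) (p : config) (Eb : nat -> nat -> R -> R)
  (P : R -> config).
Hypothesis framework_p : framework n d E p.
Hypothesis stiff_Eb : stiff_bar d E Eb p.
Hypothesis trajectory_P : trajectory n d l p P.

Lemma smooth_bar_sqlength e : In e E -> smooth (bar_sqlength d P e) 0.
Proof.
  intros He. destruct (proj2 (proj1 framework_p) e He).
  apply smooth_sqdist; intros; apply (trajectory_smooth n d l p P); auto; lia.
Qed.

Lemma bar_sqlength_at0 e : In e E -> bar_sqlength d P e 0 = sqdist d (p (fst e)) (p (snd e)).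
Proof.
  intros He. destruct (proj2 (proj1 framework_p) e He).
  destruct trajectory_P as [eps [_ [HP0 _]]].
  apply sqdist_ext; intros; apply HP0; auto; lia.
Qed.

Lemma bar_potential_nondegenerate e : In e E ->
  smooth (bar_potential Eb e) (bar_sqlength d P e 0) /\
  Derive (bar_potential Eb e) (bar_sqlength d P e 0) = 0 /\
  0 < Derive_n (bar_potential Eb e) 2 (bar_sqlength d P e 0).
Proof.
  intros He. destruct (stiff_Eb e He) as [Han [Hmin HF2]].
  unfold Defs.dist in Han, Hmin, HF2. rewrite <- (bar_sqlength_at0 e He) in Han, Hmin, HF2.
  apply comp_sqrt_nondegenerate_min; auto.
  rewrite bar_sqlength_at0 by exact He. apply sqdist_pos.
  destruct (proj2 framework_p e He) as [c [Hc Hne]]. eauto.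
Qed.

End Framework.

Theorem theorem3p13 :
  forall (n d l : nat) (E : list (nat * nat)) (p : config)
         (Eb : nat -> nat -> R -> R) (P : R -> config) (j k : nat),
    framework n d E p ->
    pinned n d p l ->
    stiff_bar d E Eb p ->
    trajectory n d l p P ->
    (flex n d l E p P j k <-> f_flex n d l p (energy d E Eb) P j (2 * k)) /\
    (f_flex n d l p (energy d E Eb) P j (2 * k) <->
     f_flex n d l p (energy d E Eb) P j (2 * k + 1)).
Proof.
  intros n d l E p Eb P j k Hfw _ Hstiff Htraj.
  pose proof (smooth_bar_sqlength n d l E p P Hfw Htraj) as Hs.
  pose proof (bar_potential_nondegenerate n d l E p Eb P Hfw Hstiff Htraj) as Hphi.
  pose proof (bar_energy_vanishing _ E _ _ Hs (fun e He => proj1 (Hphi e He))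
                (fun e He => proj1 (proj2 (Hphi e He))) k) as Hup.
  pose proof (bars_vanishing_of_energy _ E _ _ Hs (fun e He => proj1 (Hphi e He))
                (fun e He => proj1 (proj2 (Hphi e He)))
                (fun e He => proj2 (proj2 (Hphi e He))) k) as Hdown.
  unfold flex, f_flex.
  change (fun t => energy d E Eb (P t)) with (bar_energy E (bar_sqlength d P) (bar_potential Eb)).
  split; split; intros [Htr [Hact Hvan]]; refine (conj Htr (conj Hact _)).
  - intros i Hi. apply Hup; [exact Hvan|lia].
  - exact (Hdown Hvan).
  - exact (Hup (Hdown Hvan)).
  - intros i Hi. apply Hvan. lia.
Qed.
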